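(* Fix $d\ge1$, the feasible set $\mathcal{X}=\mathbb{R}^d$, starting point $x_0=\mathbf{0}$, and $0<\mu\le L$, with quadratic switching cost. For every online algorithm $\mathcal{A}$ operating in the limited information setting, the competitive ratio satisfies $\mathrm{cr}_{\mathcal{A}}\ge L$.
   Context: A problem instance consists of a horizon $T\ge1$ and differentiable functions $f_1,\dots,f_T:\mathbb{R}^d\to[0,\infty)$ with $\frac{\mu}{2}\|y-x\|^2\le f_t(y)-f_t(x)-\langle\nabla f_t(x),y-x\rangle\le\frac{L}{2}\|y-x\|^2$ for all $x,y$. An online algorithm in the limited information setting chooses, at each time $t$, an action $x_t$ using only $x_0$, the known parameters, and gradients of $f_{t-1}$ (and of earlier functions) evaluated at finitely many (adaptively chosen) points; in particular $x_t$ is chosen without any information about $f_t,\dots,f_T$. The algorithm's cost is $C_{\mathcal{A}}=\sum_{t=1}^T\big(f_t(x_t)+\frac12\|x_t-x_{t-1}\|^2\big)$, $C_{\mathsf{OPT}}$ is the minimum of the same expression over all $(x_1,\dots,x_T)$ with the same $x_0$, and $\mathrm{cr}_{\mathcal{A}}=\sup C_{\mathcal{A}}/C_{\mathsf{OPT}}$ over all problem instances. *)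

From HB Require Import structures.
From mathcomp Require Import all_boot all_order all_algebra.
From mathcomp Require Import all_classical all_reals all_analysis.
Set Implicit Arguments. Unset Strict Implicit. Unset Printing Implicit Defensive.
Import Order.TTheory GRing.Theory Num.Theory.
Import numFieldNormedType.Exports.
Local Open Scope classical_set_scope.
Local Open Scope ring_scope.

Section OCO.
Variables (R : realType) (d : nat).
Notation vec := 'rV[R]_d.

Definition dot (u v : vec) : R := \sum_(i < d) u 0 i * v 0 i.
Definition sqnorm (u : vec) : R := dot u u.

Definition valid_instance (mu L : R) (T : nat) (f : nat -> vec -> R)
    (grad : nat -> vec -> vec) : Prop :=
  (1 <= T)%N /\
  forall t : nat, (1 <= t <= T)%N ->
    [/\ (forall x, 0 <= f t x),
        (forall x, differentiable (f t) x),
        (forall x h, 'd (f t) x h = dot (grad t x) h) &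
        (forall x y,
           mu / 2 * sqnorm (y - x)
             <= f t y - f t x - dot (grad t x) (y - x)
           /\ f t y - f t x - dot (grad t x) (y - x) <= L / 2 * sqnorm (y - x))].

(* Adaptive gradient-query programs: either return an action, or query the
   gradient of f_s at a point y and continue depending on the answer.
   Being an inductive type, every run uses finitely many queries. *)
Inductive prog : Type :=
  | Ret : vec -> prog
  | Query : nat -> vec -> (vec -> prog) -> prog.

Fixpoint run (oracle : nat -> vec -> vec) (p : prog) : vec :=
  match p with
  | Ret x => x
  | Query s y k => run oracle (k (oracle s y))
  end.

(* A deterministic online algorithm in the limited information setting:
   for horizon T and time t, a query program computing x_t.  (It may depend
   on the known parameters d, mu, L, x_0 = 0 and T, since it is chosen after
   them.)  At time t, queries about f_s are answered with grad s only for
   1 <= s < t; otherwise the answer is 0 (no information on f_t..f_T). *)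
Definition algorithm := nat -> nat -> prog.

Definition limited_oracle (grad : nat -> vec -> vec) (t : nat) :
    nat -> vec -> vec :=
  fun s y => if (0 < s < t)%N then grad s y else 0.

Definition alg_traj (A : algorithm) (T : nat) (grad : nat -> vec -> vec)
    (t : nat) : vec :=
  if t == 0%N then 0 else run (limited_oracle grad t) (A T t).

Definition cost (T : nat) (f : nat -> vec -> R) (x : nat -> vec) : R :=
  \sum_(1 <= t < T.+1) (f t (x t) + 1 / 2 * sqnorm (x t - x t.-1)).

Definition alg_cost (A : algorithm) (T : nat) (f : nat -> vec -> R)
    (grad : nat -> vec -> vec) : R :=
  cost T f (alg_traj A T grad).

Definition opt_cost (T : nat) (f : nat -> vec -> R) : R :=
  inf [set cost T f x | x in [set x : nat -> vec | x 0%N = 0]].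

End OCO.

From HB Require Import structures.
From mathcomp Require Import all_boot all_order all_algebra.
From mathcomp Require Import all_classical all_reals all_analysis ring lra.
Import Order.TTheory GRing.Theory Num.Theory.
Import numFieldNormedType.Exports.
Local Open Scope ring_scope.

Set Implicit Arguments. Unset Strict Implicit.

(* With a single round, the algorithm must commit to x_1 = a before seeing any
   gradient.  The adversary then plays f_1 = L/2 |x - v|^2 for a nonzero v with
   <a, v> <= 0, so the algorithm pays at least L/2 |v|^2, while the offline
   player moves to L/(L+1) v and pays only L/(2(L+1)) |v|^2: the ratio is at
   least L + 1. *)

Section Differentiation.
Variables (R : realType) (V W : normedModType R).

Lemma is_diff_sum (I : Type) (r : seq I) (P : pred I) (F dF : I -> V -> W) x :
  (forall i, P i -> is_diff x (F i) (dF i)) ->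
  is_diff x (\sum_(i <- r | P i) F i) (\sum_(i <- r | P i) dF i).
Proof.
move=> dF_F; apply: (big_ind2 (fun F dF => is_diff x F dF)) => //.
- exact: is_diff_cst.
- by move=> ? ? ? ? ? ?; apply: is_diffD.
Qed.

End Differentiation.

Section Geometry.
Variables (R : realType) (d : nat).
Local Notation vec := 'rV[R]_d.
Implicit Types (u v w : vec) (k : R).

Lemma dotC u v : dot u v = dot v u.
Proof. by apply: eq_bigr => i _; rewrite mulrC. Qed.

Lemma dotDl u w v : dot (u + w) v = dot u v + dot w v.
Proof. by rewrite /dot -big_split; apply: eq_bigr => i _; rewrite mxE mulrDl. Qed.

Lemma dotZl k u v : dot (k *: u) v = k * dot u v.
Proof. by rewrite /dot mulr_sumr; apply: eq_bigr => i _; rewrite mxE mulrA. Qed.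

Lemma dotDr u w v : dot v (u + w) = dot v u + dot v w.
Proof. by rewrite dotC dotDl !(dotC v). Qed.

Lemma dotZr k u v : dot v (k *: u) = k * dot v u.
Proof. by rewrite dotC dotZl dotC. Qed.

Lemma sqnorm_ge0 u : 0 <= sqnorm u.
Proof. by apply: sumr_ge0 => i _; rewrite -expr2 sqr_ge0. Qed.

Lemma sqnormZ k u : sqnorm (k *: u) = k ^+ 2 * sqnorm u.
Proof. by rewrite /sqnorm dotZl dotZr mulrA. Qed.

Lemma sqnormD u v : sqnorm (u + v) = sqnorm u + 2 * dot u v + sqnorm v.
Proof. by rewrite /sqnorm dotDl !dotDr [dot v u]dotC; lra. Qed.

Lemma sqnormB u v : sqnorm (u - v) = sqnorm u - 2 * dot u v + sqnorm v.
Proof. by rewrite -scaleN1r sqnormD sqnormZ dotZr; lra. Qed.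

Lemma sqnorm_const_mx1 : sqnorm (const_mx 1 : vec) = d%:R.
Proof.
rewrite /sqnorm /dot; under eq_bigr do rewrite mxE mulr1.
by rewrite sumr_const card_ord.
Qed.

Lemma exists_nonpos_dot (a : vec) : (0 < d)%N ->
  exists v, 0 < sqnorm v /\ dot a v <= 0.
Proof.
move=> d_gt0; have u_pos : 0 < sqnorm (const_mx 1 : vec).
  by rewrite sqnorm_const_mx1 ltr0n.
have [au_ge0 | au_lt0] := leP 0 (dot a (const_mx 1)).
  exists (- const_mx 1); rewrite -scaleN1r sqnormZ dotZr; split; lra.
by exists (const_mx 1); split => //; exact: ltW.
Qed.

Lemma is_diff_coord (i : 'I_d) x :
  is_diff x (fun y : vec => y 0 i) (fun y : vec => y 0 i).
Proof.
have coord_linear : linear (fun y : vec => y 0 i) by move=> k u w; rewrite !mxE.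
pose coord : {linear vec -> R^o} :=
  HB.pack (fun y : vec => y 0 i) (GRing.isLinear.Build _ _ _ _ _ coord_linear).
have coord_cont : continuous coord by exact: coord_continuous.
apply: DiffDef; first exact: (@linear_differentiable _ _ _ coord _ coord_cont).
exact: (@diff_lin _ _ _ coord _ coord_cont).
Qed.

Lemma is_diff_sqnorm_sub v x :
  is_diff x (fun y => sqnorm (y - v)) (fun h => 2 * dot (x - v) h).
Proof.
pose g (i : 'I_d) := (fun y : vec => y 0 i) - cst (v 0 i).
have dg i : is_diff x (g i) (fun y : vec => y 0 i).
  have := is_diffB (is_diff_coord i x) (is_diff_cst (v 0 i) x).
  by move/is_diff_eq; apply; rewrite subr0.
have -> : (fun y => sqnorm (y - v)) = \sum_i g i ^+ 2.
  apply/funext => y; rewrite fct_sumE; apply: eq_bigr => i _.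
  by rewrite /g /= !mxE expr2.
have := @is_diff_sum _ _ _ _ (index_enum 'I_d) xpredT _ _ x
  (fun i _ => is_diffX 1 (dg i)).
move/is_diff_eq; apply; apply/funext => h.
rewrite fct_sumE /dot mulr_sumr; apply: eq_bigr => i _.
by rewrite /g /= !mxE expr1 mulrA.
Qed.

End Geometry.

Section QuadraticInstance.
Variables (R : realType) (d : nat).
Local Notation vec := 'rV[R]_d.
Implicit Types (v x y : vec) (k : R).

Definition quad k v : vec -> R := fun y => k / 2 * sqnorm (y - v).

Lemma quad_ge0 k v y : 0 <= k -> 0 <= quad k v y.
Proof. by move=> k_ge0; rewrite mulr_ge0 ?divr_ge0 ?sqnorm_ge0. Qed.

Lemma is_diff_quad k v x : is_diff x (quad k v) (dot (k *: (x - v))).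
Proof.
have := is_diffZ (k / 2) (is_diff_sqnorm_sub v x).
move/is_diff_eq; apply; apply/funext => h.
by rewrite -[LHS]/(k / 2 * (2 * dot (x - v) h)) dotZl; field.
Qed.

Lemma quad_bregman k v x y :
  quad k v y - quad k v x - dot (k *: (x - v)) (y - x) = k / 2 * sqnorm (y - x).
Proof.
rewrite /quad (_ : y - v = (x - v) + (y - x)); last by rewrite [RHS]addrC addrA subrK.
by rewrite sqnormD dotZl; field.
Qed.

Lemma valid_quad_instance mu L T v : 0 <= L -> mu <= L -> (1 <= T)%N ->
  valid_instance mu L T (fun=> quad L v) (fun _ x => L *: (x - v)).
Proof.
move=> L_ge0 muL T_ge1; split=> // t _; split=> [x|x|x h|x y].
- exact: quad_ge0.
- by have := is_diff_quad L v x.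
- by have dq := is_diff_quad L v x; rewrite diff_val.
- rewrite quad_bregman; split=> //.
  by apply: ler_wpM2r; [exact: sqnorm_ge0 | lra].
Qed.

(* (k/(k+1)) v minimises quad k v y + |y|^2/2. *)
Lemma quad_cost_shrink k v : 0 <= k ->
  quad k v ((k / (k + 1)) *: v) + 1 / 2 * sqnorm ((k / (k + 1)) *: v)
  = k / (2 * (k + 1)) * sqnorm v.
Proof.
move=> k_ge0; have k1_neq0 : k + 1 != 0 by rewrite gt_eqF //; lra.
rewrite /quad (_ : _ *: v - v = (- (k + 1)^-1) *: v); last first.
  by rewrite -{2}(scale1r v) -scalerBl; congr (_ *: _); field.
by rewrite !sqnormZ; field.
Qed.

Lemma quad_cost_ge k v a : 0 <= k -> dot a v <= 0 ->
  k / 2 * sqnorm v <= quad k v a + 1 / 2 * sqnorm a.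
Proof.
move=> k_ge0 av_le0; rewrite /quad sqnormB.
have := sqnorm_ge0 a; have : 0 <= k / 2 * (sqnorm a - 2 * dot a v).
  by apply: mulr_ge0; have := sqnorm_ge0 a; lra.
lra.
Qed.

End QuadraticInstance.

Section Protocol.
Variables (R : realType) (d : nat).
Local Notation vec := 'rV[R]_d.

Lemma alg_traj1 (A : algorithm R d) T grad :
  alg_traj A T grad 1 = run (fun _ _ => 0) (A T 1%N).
Proof.
rewrite /alg_traj /=; congr run.
by apply/funext => -[|s]; apply/funext.
Qed.

Lemma cost1 (f : nat -> vec -> R) x :
  cost 1 f x = f 1%N (x 1%N) + 1 / 2 * sqnorm (x 1%N - x 0%N).
Proof. by rewrite /cost big_nat1. Qed.

Lemma opt_cost_le T (f : nat -> vec -> R) (x : nat -> vec) :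
  (forall t y, 0 <= f t y) -> x 0%N = 0 -> opt_cost T f <= cost T f x.
Proof.
move=> f_ge0 x0; apply: ge_inf; last by exists x.
exists 0 => _ [z _ <-]; apply: sumr_ge0 => t _.
by rewrite addr_ge0 ?mulr_ge0 ?sqnorm_ge0.
Qed.

End Protocol.

Theorem lemma9 (R : realType) (d : nat) (mu L : R) :
  (1 <= d)%N -> 0 < mu -> mu <= L ->
  forall A : algorithm R d,
  forall c : R, 0 < c -> c < L ->
  exists (T : nat) (f : nat -> 'rV[R]_d -> R) (grad : nat -> 'rV[R]_d -> 'rV[R]_d),
    valid_instance mu L T f grad /\
    c * opt_cost T f < alg_cost A T f grad.
Proof.
move=> d_gt0 mu_gt0 muL A c c_gt0 cL.
have L_gt0 : 0 < L by exact: lt_le_trans muL.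
set a := run (fun _ _ => 0) (A 1%N 1%N).
have [v [v_pos av_le0]] := exists_nonpos_dot a d_gt0.
exists 1%N, (fun=> quad L v), (fun _ x => L *: (x - v)); split.
  exact: valid_quad_instance (ltW L_gt0) muL _.
have opt_le : opt_cost 1 (fun=> quad L v) <= L / (2 * (L + 1)) * sqnorm v.
  pose x t : 'rV[R]_d := if t == 0%N then 0 else (L / (L + 1)) *: v.
  have f_ge0 (t : nat) y : 0 <= quad L v y by exact: quad_ge0 (ltW L_gt0).
  apply: le_trans (opt_cost_le 1 (f := fun=> quad L v) (x := x) f_ge0 erefl) _.
  by rewrite cost1 /x /= subr0 quad_cost_shrink // ltW.
have alg_ge :
    L / 2 * sqnorm v <= alg_cost A 1 (fun=> quad L v) (fun _ x => L *: (x - v)).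
  rewrite /alg_cost cost1 alg_traj1 -/a /alg_traj /= subr0.
  exact: quad_cost_ge (ltW L_gt0) av_le0.
apply: le_lt_trans (ler_wpM2l (ltW c_gt0) opt_le) (lt_le_trans _ alg_ge).
have -> : c * (L / (2 * (L + 1)) * sqnorm v) = c / (L + 1) * (L / 2 * sqnorm v).
  by field; rewrite gt_eqF //; lra.
rewrite gtr_pMl ?ltr_pdivrMr ?mul1r ?mulr_gt0 //; lra.
Qed.
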